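(* Let $x\in\mathbb{R}^d$ with success probabilities $\rho_i(x)>\tfrac12$ for all $i$, let $M\ge1$, $l=\lfloor\frac{M+1}2\rfloor$, and $\rho(x):=\min_{1\le i\le d}\rho_i(x)$. Then $$\big(1-e^{-(2\rho(x)-1)^2l}\big)\|g(x)\|_1\le\|g(x)\|_{\rho_M}\le\|g(x)\|_1.$$
   Context: $g(x)\in\mathbb{R}^d$ is the gradient at $x$ and $\rho_i(x)\in(\tfrac12,1]$ are given numbers (success probabilities). $I(p;a,b)=\frac{\int_0^pt^{a-1}(1-t)^{b-1}dt}{\int_0^1t^{a-1}(1-t)^{b-1}dt}$ is the regularized incomplete beta function, and $\|g(x)\|_{\rho_M}:=\sum_{i=1}^d\big(2I(\rho_i(x);l,l)-1\big)|g_i(x)|$. *)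

From Stdlib Require Import Reals Lra Lia List.
Open Scope R_scope.

Definition beta_integrand (a b : nat) (t : R) : R :=
  t ^ (a - 1) * (1 - t) ^ (b - 1).

Lemma beta_integrand_continuous (a b : nat) : continuity (beta_integrand a b).
Proof.
  unfold beta_integrand. apply continuity_mult.
  - apply derivable_continuous, derivable_pow.
  - apply (continuity_comp (fun t => 1 - t) (fun u => u ^ (b - 1))).
    + apply continuity_minus; [apply continuity_const; intros x y; reflexivity | apply derivable_continuous, derivable_id].
    + apply derivable_continuous, derivable_pow.
Qed.

Lemma beta_integrable (a b : nat) (p : R) :
  Riemann_integrable (beta_integrand a b) 0 p.
Proof.
  destruct (Rle_dec 0 p) as [H|H].
  - apply continuity_implies_RiemannInt; [exact H|].
    intros x _; apply beta_integrand_continuous.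
  - apply RiemannInt_P1, continuity_implies_RiemannInt; [lra|].
    intros x _; apply beta_integrand_continuous.
Qed.

Definition beta_inc (a b : nat) (p : R) : R := RiemannInt (beta_integrable a b p).

Definition reg_inc_beta (p : R) (a b : nat) : R := beta_inc a b p / beta_inc a b 1.

Definition fsum (d : nat) (f : nat -> R) : R :=
  fold_right (fun i acc => f i + acc) 0 (seq 0 d).

Definition norm1 (d : nat) (v : nat -> R) : R := fsum d (fun i => Rabs (v i)).

Definition lfloor (M : nat) : nat := ((M + 1) / 2)%nat.

Definition norm_rhoM (d M : nat) (rho : nat -> R) (v : nat -> R) : R :=
  fsum d (fun i => (2 * reg_inc_beta (rho i) (lfloor M) (lfloor M) - 1) * Rabs (v i)).

(* rho = min_{0 <= i < d} rho_i  (only used with d >= 1) *)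
Definition rho_min (d : nat) (rho : nat -> R) : R :=
  match d with
  | O => 1
  | S d' => fold_right (fun i acc => Rmin (rho i) acc) (rho d') (seq 0 d')
  end.

From Stdlib Require Import Reals Lra Lia List.
From Coquelicot Require Import Coquelicot.
Open Scope R_scope.

(* Everything reduces to one coordinate: for a >= 1 and
   1/2 < p <= 1, with q := 2p - 1,
       1 - exp (-q^2 a) <= 2 I(p; a, a) - 1 <= 1.
   Write w(t) = (t(1-t))^(a-1) for the symmetric beta weight and H, T for
   its integrals over [1/2, 1] and [p, 1].  By the symmetry w(1-t) = w(t)
   the integral over [0, 1] is 2H, hence 2 I(p; a, a) - 1 = 1 - T/H.
   The substitution v |-> s(v) = (1 + sqrt (q^2 + (2v-1)^2 (1-q^2)))/2
   maps [1/2, 1] onto [p, 1], satisfies s(1-s) = (1-q^2) v(1-v) and has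
   slope at most 1 - q^2; therefore T <= (1-q^2)^a H <= exp(-q^2 a) H. *)

Definition beta_weight (a : nat) : R -> R := beta_integrand a a.

Lemma beta_weight_continuous (a : nat) (t : R) : continuous (beta_weight a) t.
Proof. apply continuity_pt_filterlim, beta_integrand_continuous. Qed.

Lemma beta_weight_ex_RInt (a : nat) (u v : R) : ex_RInt (beta_weight a) u v.
Proof.
  apply (@ex_RInt_continuous R_CompleteNormedModule).
  intros; apply beta_weight_continuous.
Qed.

Lemma beta_weight_reflect (a : nat) (t : R) : beta_weight a (1 - t) = beta_weight a t.
Proof. unfold beta_weight, beta_integrand. replace (1 - (1 - t)) with t by ring. ring. Qed.

Lemma beta_weight_nonneg (a : nat) (t : R) : 0 <= t <= 1 -> 0 <= beta_weight a t.
Proof. intros. unfold beta_weight, beta_integrand. apply Rmult_le_pos; apply pow_le; lra. Qed.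

Lemma beta_weight_succ (k : nat) (t : R) : beta_weight (S k) t = (t * (1 - t)) ^ k.
Proof.
  unfold beta_weight, beta_integrand. simpl. rewrite Nat.sub_0_r.
  symmetry; apply Rpow_mult_distr.
Qed.

Lemma RInt_beta_weight_reflect (a : nat) (p : R) :
  RInt (beta_weight a) 0 (1 - p) = RInt (beta_weight a) p 1.
Proof.
  pose proof (@RInt_comp_lin R_CompleteNormedModule (beta_weight a) (-1) 1 p 1
                (beta_weight_ex_RInt _ _ _)) as H.
  rewrite (RInt_ext _ (fun y => scal (-1) (beta_weight a y))) in H.
  2:{ intros t _. f_equal. rewrite <- (beta_weight_reflect a t). f_equal. ring. }
  rewrite (@RInt_scal R_CompleteNormedModule) in H by apply beta_weight_ex_RInt.
  replace (-1 * p + 1) with (1 - p) in H by ring.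
  replace (-1 * 1 + 1) with 0 in H by ring.
  rewrite <- (opp_RInt_swap _ 0 (1 - p)) in H by apply beta_weight_ex_RInt.
  unfold scal, opp in H; simpl in H; unfold mult in H; simpl in H. lra.
Qed.

Lemma beta_weight_half_pos (k : nat) : 0 < RInt (beta_weight (S k)) (1/2) 1.
Proof.
  apply RInt_gt_0; [lra| |intros; apply beta_weight_continuous].
  intros t Ht. rewrite beta_weight_succ. apply pow_lt. nra.
Qed.

(* The regularized incomplete beta function in terms of the tail integral:
   by symmetry int_0^1 w = 2 int_(1/2)^1 w, hence
   2 I(p; a, a) - 1 = 1 - (int_p^1 w) / (int_(1/2)^1 w). *)
Lemma reg_inc_beta_tail (k : nat) (p : R) :
  2 * reg_inc_beta p (S k) (S k) - 1
    = 1 - RInt (beta_weight (S k)) p 1 / RInt (beta_weight (S k)) (1/2) 1.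
Proof.
  pose proof (beta_weight_half_pos k) as Hpos.
  unfold reg_inc_beta, beta_inc. rewrite <- !RInt_Reals. fold (beta_weight (S k)).
  assert (Hsplit : forall c, RInt (beta_weight (S k)) 0 1
                   = RInt (beta_weight (S k)) 0 c + RInt (beta_weight (S k)) c 1).
  { intros c. symmetry. apply (@RInt_Chasles R_CompleteNormedModule); apply beta_weight_ex_RInt. }
  assert (Hhalves : RInt (beta_weight (S k)) 0 (1/2) = RInt (beta_weight (S k)) (1/2) 1).
  { rewrite <- RInt_beta_weight_reflect. f_equal. field. }
  pose proof (Hsplit (1/2)) as Htotal. pose proof (Hsplit p) as Hp.
  rewrite Hhalves in Htotal. rewrite Htotal in Hp |- *.
  replace (RInt (beta_weight (S k)) 0 p)
    with (2 * RInt (beta_weight (S k)) (1/2) 1 - RInt (beta_weight (S k)) p 1) by lra.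
  field. lra.
Qed.

Definition radicand (q v : R) : R := q ^ 2 + (2 * v - 1) ^ 2 * (1 - q ^ 2).
Definition stretch (q v : R) : R := (1 + sqrt (radicand q v)) / 2.
Definition stretch_slope (q v : R) : R := (2 * v - 1) * (1 - q ^ 2) / sqrt (radicand q v).

Lemma radicand_pos (q v : R) : 0 < q <= 1 -> 0 < radicand q v.
Proof.
  intros. unfold radicand.
  assert (0 <= (2 * v - 1) ^ 2 * (1 - q ^ 2)) by (apply Rmult_le_pos; [apply pow2_ge_0|nra]).
  nra.
Qed.

Lemma stretch_is_derive (q v : R) : 0 < q <= 1 -> is_derive (stretch q) v (stretch_slope q v).
Proof.
  intros Hq. pose proof (radicand_pos q v Hq) as Hr.
  assert (0 < sqrt (radicand q v)) by (apply sqrt_lt_R0; auto).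
  unfold stretch, stretch_slope, radicand in *. auto_derive; [exact Hr|].
  set (s := sqrt _) in *. field. lra.
Qed.

Lemma stretch_slope_continuous (q v : R) : 0 < q <= 1 -> continuous (stretch_slope q) v.
Proof.
  intros Hq. apply (@ex_derive_continuous R_AbsRing R_NormedModule).
  pose proof (radicand_pos q v Hq) as Hr.
  unfold stretch_slope, radicand in *. auto_derive.
  split; [nra | split; [apply Rgt_not_eq, sqrt_lt_R0; nra | exact I]].
Qed.

Lemma stretch_endpoints (q : R) : 0 < q <= 1 -> stretch q (1/2) = (1 + q) / 2 /\ stretch q 1 = 1.
Proof.
  intros Hq. unfold stretch, radicand. split.
  - replace (q ^ 2 + (2 * (1 / 2) - 1) ^ 2 * (1 - q ^ 2)) with (q ^ 2) by field.
    rewrite sqrt_pow2 by lra. reflexivity.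
  - replace (q ^ 2 + (2 * 1 - 1) ^ 2 * (1 - q ^ 2)) with 1 by ring.
    rewrite sqrt_1. field.
Qed.

(* The defining property of s_q: it scales t(1-t) by exactly 1 - q^2. *)
Lemma stretch_product (q v : R) :
  0 < q <= 1 -> stretch q v * (1 - stretch q v) = (1 - q ^ 2) * (v * (1 - v)).
Proof.
  intros Hq. pose proof (sqrt_sqrt _ (Rlt_le _ _ (radicand_pos q v Hq))) as Hs.
  unfold stretch. set (s := sqrt (radicand q v)) in *. unfold radicand in Hs.
  replace ((1 + s) / 2 * (1 - (1 + s) / 2)) with ((1 - s * s) / 4) by field.
  rewrite Hs. field.
Qed.

Lemma stretch_slope_bounds (q v : R) :
  0 < q <= 1 -> 1/2 <= v <= 1 -> 0 <= stretch_slope q v <= 1 - q ^ 2.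
Proof.
  intros Hq Hv. pose proof (radicand_pos q v Hq) as Hr.
  assert (Hsp : 0 < sqrt (radicand q v)) by (apply sqrt_lt_R0; auto).
  assert (Hle : 2 * v - 1 <= sqrt (radicand q v)).
  { rewrite <- (sqrt_pow2 (2 * v - 1)) by lra. apply sqrt_le_1_alt.
    unfold radicand. assert ((2 * v - 1) ^ 2 <= 1) by nra. nra. }
  unfold stretch_slope. split.
  - apply Rdiv_le_0_compat; [apply Rmult_le_pos|]; nra.
  - apply (Rmult_le_reg_r (sqrt (radicand q v))); [exact Hsp|].
    unfold Rdiv. rewrite Rmult_assoc, Rinv_l, Rmult_1_r, (Rmult_comm (1 - q ^ 2)) by lra.
    apply Rmult_le_compat_r; nra.
Qed.

Lemma stretch_weight_bound (k : nat) (q v : R) :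
  0 < q <= 1 -> 1/2 <= v <= 1 ->
  stretch_slope q v * beta_weight (S k) (stretch q v) <= (1 - q ^ 2) ^ S k * beta_weight (S k) v.
Proof.
  intros Hq Hv. rewrite !beta_weight_succ, stretch_product, Rpow_mult_distr by exact Hq.
  pose proof (stretch_slope_bounds q v Hq Hv).
  assert (0 <= (1 - q ^ 2) ^ k * (v * (1 - v)) ^ k) by (apply Rmult_le_pos; apply pow_le; nra).
  replace ((1 - q ^ 2) ^ S k * (v * (1 - v)) ^ k)
    with ((1 - q ^ 2) * ((1 - q ^ 2) ^ k * (v * (1 - v)) ^ k)) by (simpl; ring).
  apply Rmult_le_compat_r; lra.
Qed.

(* Tail contraction: int_((1+q)/2)^1 w <= (1-q^2)^(k+1) int_(1/2)^1 w for
   w = beta_weight (k+1), by integrating the pointwise bound after the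
   change of variables v |-> s_q(v). *)
Lemma beta_tail_contraction (k : nat) (q : R) : 0 < q <= 1 ->
  RInt (beta_weight (S k)) ((1 + q) / 2) 1
    <= (1 - q ^ 2) ^ S k * RInt (beta_weight (S k)) (1/2) 1.
Proof.
  intros Hq. destruct (stretch_endpoints q Hq) as [E1 E2].
  assert (Hsubst : RInt (fun v => scal (stretch_slope q v) (beta_weight (S k) (stretch q v))) (1/2) 1
                   = RInt (beta_weight (S k)) ((1 + q) / 2) 1).
  { rewrite (@RInt_comp R_CompleteNormedModule), E1, E2; [reflexivity| |].
    - intros; apply beta_weight_continuous.
    - intros; split; [apply stretch_is_derive | apply stretch_slope_continuous]; auto. }
  rewrite <- Hsubst.
  rewrite <- (@RInt_scal R_CompleteNormedModule) by apply beta_weight_ex_RInt.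
  apply RInt_le; [lra| | |].
  - apply (@ex_RInt_continuous R_CompleteNormedModule). intros z _.
    apply (@continuous_scal R_UniformSpace R_AbsRing R_NormedModule).
    + apply stretch_slope_continuous; auto.
    + apply (@continuous_comp R_UniformSpace R_UniformSpace R_UniformSpace).
      * apply (@ex_derive_continuous R_AbsRing R_NormedModule).
        eexists; apply stretch_is_derive; auto.
      * apply beta_weight_continuous.
  - apply (@ex_RInt_continuous R_CompleteNormedModule). intros z _.
    apply (@continuous_scal R_UniformSpace R_AbsRing R_NormedModule).
    + apply continuous_const.
    + apply beta_weight_continuous.
  - intros v Hv. unfold scal; simpl; unfold mult; simpl.
    apply stretch_weight_bound; lra.
Qed.

Lemma exp_pow (x : R) (n : nat) : exp x ^ n = exp (x * INR n).
Proof.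
  induction n as [|n IH].
  - simpl. rewrite Rmult_0_r, exp_0. reflexivity.
  - rewrite S_INR. simpl pow. rewrite IH, <- exp_plus. f_equal. ring.
Qed.

(* (1 - x)^n <= exp(-x n) for 0 <= x <= 1, from 1 - x <= exp(-x). *)
Lemma one_minus_pow_le_exp (x : R) (n : nat) :
  0 <= x <= 1 -> (1 - x) ^ n <= exp (- (x * INR n)).
Proof.
  intros Hx. replace (- (x * INR n)) with (- x * INR n) by ring.
  rewrite <- exp_pow. apply pow_incr. pose proof (exp_ineq1_le (- x)). lra.
Qed.

Lemma reg_inc_beta_bounds (a : nat) (p : R) : (1 <= a)%nat -> 1/2 < p <= 1 ->
  1 - exp (- ((2 * p - 1) ^ 2 * INR a)) <= 2 * reg_inc_beta p a a - 1 <= 1.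
Proof.
  intros Ha Hp. destruct a as [|k]; [lia|].
  rewrite reg_inc_beta_tail. pose proof (beta_weight_half_pos k) as Hpos.
  set (H := RInt (beta_weight (S k)) (1/2) 1) in *.
  set (T := RInt (beta_weight (S k)) p 1).
  set (q := 2 * p - 1).
  assert (Hq : 0 < q <= 1) by (unfold q; lra).
  assert (Htail : T <= (1 - q ^ 2) ^ S k * H).
  { unfold T. replace p with ((1 + q) / 2) at 1 by (unfold q; field).
    now apply beta_tail_contraction. }
  assert (Htail_nonneg : 0 <= T).
  { apply RInt_ge_0; [lra | apply beta_weight_ex_RInt |].
    intros; apply beta_weight_nonneg; lra. }
  assert (Hratio : T / H <= exp (- (q ^ 2 * INR (S k)))).
  { apply (Rle_trans _ ((1 - q ^ 2) ^ S k)).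
    - apply (Rmult_le_reg_r H); [exact Hpos|].
      unfold Rdiv. rewrite Rmult_assoc, Rinv_l by lra. lra.
    - apply one_minus_pow_le_exp. nra. }
  assert (0 <= T / H) by (apply Rdiv_le_0_compat; lra).
  fold q. lra.
Qed.

Lemma exp_lower_bound_monotone (a : nat) (p p' : R) : 1/2 <= p <= p' ->
  1 - exp (- ((2 * p - 1) ^ 2 * INR a)) <= 1 - exp (- ((2 * p' - 1) ^ 2 * INR a)).
Proof.
  intros Hp. apply Rplus_le_compat_l, Ropp_le_contravar.
  assert (Hexp : - ((2 * p' - 1) ^ 2 * INR a) <= - ((2 * p - 1) ^ 2 * INR a)).
  { apply Ropp_le_contravar, Rmult_le_compat_r; [apply pos_INR|]. apply pow_incr. lra. }
  destruct Hexp as [Hlt | ->]; [left; now apply exp_increasing | apply Rle_refl].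
Qed.

Lemma fsum_le (d : nat) (f h : nat -> R) :
  (forall i, (i < d)%nat -> f i <= h i) -> fsum d f <= fsum d h.
Proof.
  unfold fsum. intros Hfh.
  assert (Hlist : forall L, (forall i, In i L -> f i <= h i) ->
            fold_right (fun i acc => f i + acc) 0 L <= fold_right (fun i acc => h i + acc) 0 L).
  { induction L as [|j L IH]; intros HL; simpl; [lra|].
    apply Rplus_le_compat; [apply HL; now left | apply IH; intros; apply HL; now right]. }
  apply Hlist. intros i Hi. apply in_seq in Hi. apply Hfh. lia.
Qed.

Lemma fsum_scal (d : nat) (c : R) (f : nat -> R) :
  fsum d (fun i => c * f i) = c * fsum d f.
Proof.
  unfold fsum. induction (seq 0 d) as [|j L IH]; simpl; [ring|]. rewrite IH. ring.
Qed.

Lemma rho_min_le (d : nat) (r : nat -> R) (i : nat) : (i < d)%nat -> rho_min d r <= r i.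
Proof.
  intros Hi. destruct d as [|d]; [lia|]. simpl.
  assert (Hfold : forall z L, fold_right (fun j acc => Rmin (r j) acc) z L <= z /\
            (forall j, In j L -> fold_right (fun j acc => Rmin (r j) acc) z L <= r j)).
  { intros z. induction L as [|j L [IH1 IH2]]; simpl.
    - split; [lra | intros _ []].
    - split; [eapply Rle_trans; [apply Rmin_r | exact IH1]|].
      intros m [<- | Hm]; [apply Rmin_l | eapply Rle_trans; [apply Rmin_r | auto]]. }
  destruct (Hfold (r d) (seq 0 d)) as [Hlast Hinit].
  destruct (Nat.eq_dec i d) as [-> | Hne]; [exact Hlast|].
  apply Hinit, in_seq. lia.
Qed.

Lemma rho_min_gt (d : nat) (r : nat -> R) (c : R) : (0 < d)%nat ->
  (forall i, (i < d)%nat -> c < r i) -> c < rho_min d r.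
Proof.
  intros Hd Hr. destruct d as [|d]; [lia|]. simpl.
  assert (Hfold : forall L, (forall j, In j L -> c < r j) ->
            c < fold_right (fun j acc => Rmin (r j) acc) (r d) L).
  { induction L as [|j L IH]; simpl; intros HL; [apply Hr; lia|].
    apply Rmin_glb_lt; [apply HL; now left | apply IH; intros; apply HL; now right]. }
  apply Hfold. intros j Hj. apply in_seq in Hj. apply Hr. lia.
Qed.

(* Summing the coordinate bound over i < d, with rho_i replaced by min_i rho_i
   in the lower bound. *)
Theorem mainTheorem5 (d M : nat)
  (g rho : (nat -> R) -> nat -> R) (x : nat -> R)
  (Hrho : forall i, (i < d)%nat -> 1/2 < rho x i <= 1)
  (HM : (1 <= M)%nat) :
  (1 - exp (- ((2 * rho_min d (rho x) - 1) ^ 2 * INR (lfloor M)))) * norm1 d (g x)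
    <= norm_rhoM d M (rho x) (g x)
  /\ norm_rhoM d M (rho x) (g x) <= norm1 d (g x).
Proof.
  assert (Hl : (1 <= lfloor M)%nat) by (unfold lfloor; apply (Nat.div_le_lower_bound _ 2); lia).
  unfold norm1, norm_rhoM. rewrite <- fsum_scal.
  rewrite <- (Rmult_1_l (fsum d (fun i => Rabs (g x i)))), <- fsum_scal.
  split; apply fsum_le; intros i Hi; apply Rmult_le_compat_r; try apply Rabs_pos;
    destruct (reg_inc_beta_bounds (lfloor M) (rho x i) Hl (Hrho i Hi)) as [Hlow Hup];
    [|exact Hup].
  eapply Rle_trans; [|exact Hlow].
  apply exp_lower_bound_monotone. split.
  - left. apply rho_min_gt; [lia | intros j Hj; apply Hrho, Hj].
  - now apply rho_min_le.
Qed.
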